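(* Let $K$ be a field of characteristic $p>0$ and let $n=3$. Let $X=(x_{ij})_{1\le i,j\le 3}$ and $Y=(y_{ij})_{1\le i,j\le 3}$ be $3\times 3$ matrices of indeterminates over $K$, let $R=K[X,Y]$ be the polynomial ring in the $18$ variables $x_{ij},y_{ij}$, and let $I\subseteq R$ be the ideal generated by the off-diagonal entries of the commutator $XY-YX$. Then $R/I$ is $F$-pure.
   Context: A ring $S$ of characteristic $p>0$ is $F$-pure if the Frobenius map $F:S\to S$, $s\mapsto s^p$, is a pure ring homomorphism (i.e., $M\to M\otimes_S F_*S$ is injective for every $S$-module $M$). *)

From HB Require Import structures.
From mathcomp Require Import all_boot all_order all_algebra.
From mathcomp Require Import mpoly.
Set Implicit Arguments. Unset Strict Implicit. Unset Printing Implicit Defensive.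
Import GRing.Theory.
Local Open Scope ring_scope.

(* Polynomial ring R = K[X,Y] in 18 variables: x_ij = 'X_(lshift 9 (ij)),
   y_ij = 'X_(rshift 9 (ij)), where ij = mxvec_index i j : 'I_(3*3). *)
Definition polyR (K : fieldType) := {mpoly K[3 * 3 + 3 * 3]}.

Definition matX (K : fieldType) : 'M[polyR K]_3 :=
  \matrix_(i < 3, j < 3) 'X_(lshift (3 * 3) (mxvec_index i j)).
Definition matY (K : fieldType) : 'M[polyR K]_3 :=
  \matrix_(i < 3, j < 3) 'X_(rshift (3 * 3) (mxvec_index i j)).

Definition commXY (K : fieldType) : 'M[polyR K]_3 :=
  matX K *m matY K - matY K *m matX K.

Definition in_I (K : fieldType) (r : polyR K) : Prop :=
  exists c : 'I_3 -> 'I_3 -> polyR K,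
    r = \sum_(i < 3) \sum_(j < 3 | i != j) c i j * commXY K i j.

(* Tensor product M (x)_S F_*S via its universal property: maps b : M -> S -> N
   into an abelian group N, biadditive and S-balanced, where S acts on F_*S
   through Frobenius: s . t = s^p t. *)
Definition frob_balanced (S : comPzRingType) (p : nat) (M : lmodType S)
    (N : zmodType) (b : M -> S -> N) : Prop :=
  [/\ forall m1 m2 t, b (m1 + m2) t = b m1 t + b m2 t,
      forall m t1 t2, b m (t1 + t2) = b m t1 + b m t2 &
      forall (s : S) m t, b (s *: m) t = b m (s ^+ p * t)].

(* m (x) 1 = 0 in M (x)_S F_*S *)
Definition frob_tensor_one_zero (S : comPzRingType) (p : nat) (M : lmodType S)
    (m : M) : Prop :=
  forall (N : zmodType) (b : M -> S -> N), frob_balanced p b -> b m 1 = 0.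

Definition Fpure (S : comPzRingType) (p : nat) : Prop :=
  forall (M : lmodType S) (m : M), frob_tensor_one_zero p m -> m = 0.

From HB Require Import structures.
From mathcomp Require Import all_boot all_order all_algebra.
From mathcomp Require Import mpoly.
From mathcomp Require classical_sets boolp.
From mathcomp Require Import ring.
Set Implicit Arguments. Unset Strict Implicit. Unset Printing Implicit Defensive.
Import GRing.Theory.
Local Open Scope ring_scope.

(* R/I is even Frobenius split, and a splitting psi (additive, with
   psi (s^p t) = s psi t and psi 1 = 1) gives purity: m (x) 1 = 0 forces
   m = psi 1 m = 0.  The splitting comes from Fedder's criterion.  Let g_ij
   (i <> j) be the off-diagonal entries of XY - YX.  For a suitable weight on
   the 18 variables each g_ij has a unique heaviest monomial, these six
   monomials are products of twelve distinct variables, and a monomial x^h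
   completes their product to x_1 ... x_18.  Hence f := (prod g_ij) x^h has
   heaviest monomial x_1 ... x_18, so (x_1 ... x_18)^(p-1) is the only monomial
   of f^(p-1) all of whose exponents are -1 mod p.  The Cartier operator Phi
   (c x^(pa + (p-1)) |-> sigma c x^a, all other monomials |-> 0), built from a
   splitting sigma of the Frobenius of K (Zorn's lemma: K need not be perfect),
   then makes r |-> Phi (f^(p-1) r) a splitting of R up to a nonzero constant,
   and this map sends I into I because f^(p-1) g_ij = g_ij^p (f / g_ij)^(p-1). *)

Definition p_inverse_linear (R : comPzRingType) (p : nat) (psi : R -> R) : Prop :=
  {morph psi : x y / x + y} /\ forall r s, psi (r ^+ p * s) = r * psi s.

Definition frobenius_splitting (R : comPzRingType) (p : nat) (psi : R -> R) : Prop :=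
  p_inverse_linear p psi /\ psi 1 = 1.

Lemma Fpure_frobenius_splitting (S : comPzRingType) (p : nat) (psi : S -> S) :
  frobenius_splitting p psi -> Fpure S p.
Proof.
move=> [[psiD psiZ] psi1] M m m1_eq0.
have := m1_eq0 M (fun x t => psi t *: x); rewrite psi1 scale1r; apply.
split=> [x y t|x t1 t2|s x t].
- exact: scalerDr.
- by rewrite psiD scalerDl.
- by rewrite psiZ scalerA mulrC.
Qed.

Lemma frobenius_splitting_quotient (R S : comPzRingType) (p : nat)
    (phi : {rmorphism R -> S}) (theta : R -> R) :
    (forall s, exists r, phi r = s) -> frobenius_splitting p theta ->
    (forall r, phi r = 0 -> phi (theta r) = 0) ->
  exists psi : S -> S, frobenius_splitting p psi.
Proof.
move=> phi_surj [[thetaD thetaZ] theta1] theta_ker.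
have thetaB x y : theta (x - y) = theta x - theta y.
  by apply/eqP; rewrite eq_sym subr_eq -thetaD subrK.
have lift_ex s : exists r, phi r == s by have [r <-] := phi_surj s; exists r.
pose lift s := xchoose (lift_ex s).
have liftK s : phi (lift s) = s by apply/eqP/(xchooseP (lift_ex s)).
have lift_theta r : phi (theta (lift (phi r))) = phi (theta r).
  apply/eqP; rewrite -subr_eq0 -rmorphB -thetaB; apply/eqP/theta_ker.
  by rewrite rmorphB liftK subrr.
exists (fun s => phi (theta (lift s))); split; first split.
- by move=> s t; rewrite -{1}(liftK s) -{1}(liftK t) -rmorphD lift_theta thetaD rmorphD.
- move=> s t; rewrite -{1}(liftK s) -{1}(liftK t) -rmorphXn -rmorphM lift_theta.
  by rewrite thetaZ rmorphM liftK.
- by rewrite -(rmorph1 phi) lift_theta theta1 rmorph1.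
Qed.

Section FrobeniusAdditive.
Variables (R : comNzRingType) (p : nat).
Hypothesis pR : p \in [pchar R].

Lemma exprDp (x y : R) : (x + y) ^+ p = x ^+ p + y ^+ p.
Proof. by rewrite -!(pFrobenius_autE pR) rmorphD. Qed.

Lemma exprNp (x : R) : (- x) ^+ p = - x ^+ p.
Proof. by rewrite -!(pFrobenius_autE pR) rmorphN. Qed.

End FrobeniusAdditive.

Section FieldSplitting.
Variables (K : fieldType) (p : nat).
Hypothesis pK : p \in [pchar K].

Let p_gt0 : (0 < p)%N. Proof. exact/prime_gt0/(pcharf_prime pK). Qed.

Definition subspace_avoiding_one (A : K -> Prop) : Prop :=
  [/\ forall x y, A x -> A y -> A (x + y), forall l x, A x -> A (l ^+ p * x) & ~ A 1].

Variable A : K -> Prop.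
Hypothesis A_sub : subspace_avoiding_one A.
Hypothesis A_max : forall B, classical_sets.proper A B -> ~ subspace_avoiding_one B.

Lemma maximal_subspace0 : A 0.
Proof.
have [AD AZ A1] := A_sub; apply: boolp.contrapT => A0.
apply: (A_max (B := fun x => A x \/ x = 0)).
  by split=> [x|/(_ 0 (or_intror erefl))]; [left|].
split.
- by move=> x y [Ax|->] [Ay|->]; rewrite ?addr0 ?add0r; auto.
- by move=> l x [Ax|->]; [left; apply: AZ|right; rewrite mulr0].
- by case=> // /eqP; rewrite oner_eq0.
Qed.

Lemma maximal_subspaceN x : A x -> A (- x).
Proof. by have [_ AZ _] := A_sub; move=> /(AZ (-1)); rewrite exprNp // expr1n mulN1r. Qed.

Lemma maximal_subspace_complement mu : exists l, A (mu - l ^+ p).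
Proof.
(* Otherwise A + K^p mu would be a larger subspace avoiding 1. *)
have [AD AZ A1] := A_sub; apply: boolp.contrapT => mu_out.
pose B x := exists a nu, A a /\ x = a + nu ^+ p * mu.
apply: (A_max (B := B)); last split.
- split=> [x Ax|BA]; first by exists x, 0; rewrite expr0n gtn_eqF // mul0r addr0.
  apply: mu_out; exists 0; rewrite expr0n gtn_eqF // subr0; apply: BA.
  by exists 0, 1; rewrite expr1n mul1r add0r; split=> //; exact: maximal_subspace0.
- move=> _ _ [a [nu [Aa ->]]] [a' [nu' [Aa' ->]]].
  exists (a + a'), (nu + nu'); rewrite exprDp // mulrDl; split; [exact: AD | ring].
- move=> l _ [a [nu [Aa ->]]]; exists (l ^+ p * a), (l * nu).
  by rewrite exprMn; split; [exact: AZ | ring].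
- move=> [a [nu [Aa a_nu_mu]]]; have [nu0|nu_neq0] := eqVneq nu 0.
    by apply: A1; rewrite a_nu_mu nu0 expr0n gtn_eqF // mul0r addr0.
  apply: mu_out; exists nu^-1.
  have -> : mu - nu^-1 ^+ p = (- nu^-1) ^+ p * a.
    have nup_neq0 : nu ^+ p != 0 by rewrite expf_neq0.
    have -> : mu = (nu ^+ p)^-1 * (1 - a).
      by rewrite a_nu_mu addrC addKr mulrA mulVf ?mul1r.
    by rewrite exprNp // exprVn; ring.
  exact: AZ.
Qed.

Lemma maximal_subspace_complement_uniq mu l l' :
  A (mu - l ^+ p) -> A (mu - l' ^+ p) -> l = l'.
Proof.
have [AD AZ A1] := A_sub => Al /maximal_subspaceN Al'.
have := AD _ _ Al Al'; have -> : mu - l ^+ p + - (mu - l' ^+ p) = (l' - l) ^+ p.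
  by rewrite exprDp ?exprNp //; ring.
have [//|l_neq_l'] := eqVneq l l'.
have d_neq0 : l' - l != 0 by rewrite subr_eq0 eq_sym.
by move=> /(AZ (l' - l)^-1); rewrite -exprMn mulVf // expr1n.
Qed.

End FieldSplitting.

Lemma frobenius_splitting_field (K : fieldType) (p : nat) :
  p \in [pchar K] -> exists sigma : K -> K, frobenius_splitting p sigma.
Proof.
(* K = K^p (+) A for a maximal A, and sigma is the p-th root of the K^p-part. *)
move=> pK.
have [|A [A_sub A_max]] := @classical_sets.Zorn_bigcup K (@subspace_avoiding_one K p).
  move=> F F_sub F_chain; split.
  - move=> x y [X FX Xx] [Y FY Yy]; have [XY|YX] := F_chain X Y FX FY.
    + by exists Y => //; have [+ _ _] := F_sub Y FY; apply=> //; exact: XY.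
    + by exists X => //; have [+ _ _] := F_sub X FX; apply=> //; exact: YX.
  - by move=> l x [X FX Xx]; exists X => //; have [_ + _] := F_sub X FX; apply.
  - by move=> [X FX X1]; have [_ _] := F_sub X FX; apply.
pose sigma mu := projT1 (boolp.cid (maximal_subspace_complement pK A_sub A_max mu)).
have sigmaP mu : A (mu - sigma mu ^+ p) by rewrite /sigma; case: boolp.cid.
have sigma_uniq := maximal_subspace_complement_uniq pK A_sub.
have [AD AZ _] := A_sub.
exists sigma; split; first split.
- move=> x y; apply: (sigma_uniq (x + y)) (sigmaP _) _.
  rewrite exprDp //; have -> : x + y - (sigma x ^+ p + sigma y ^+ p) =
    x - sigma x ^+ p + (y - sigma y ^+ p) by ring.
  exact: AD.
- move=> l x; apply: (sigma_uniq (l ^+ p * x)) (sigmaP _) _.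
  by rewrite exprMn -mulrBr; exact: AZ.
- apply: (sigma_uniq 1) (sigmaP 1) _; rewrite expr1n subrr.
  exact: maximal_subspace0 A_sub A_max.
Qed.

Section WeightedLead.
Variables (K : idomainType) (n : nat) (w : 'I_n -> nat).
Local Notation R := {mpoly K[n]}.
Implicit Types (m M N : 'X_{1..n}) (P Q : R).

Definition wdeg m : nat := (\sum_(i < n) w i * m i)%N.

Definition wlead P M : Prop :=
  P@_M != 0 /\ forall m, m != M -> P@_m != 0 -> (wdeg m < wdeg M)%N.

Lemma wdegD m1 m2 : wdeg (m1 + m2)%MM = (wdeg m1 + wdeg m2)%N.
Proof. by rewrite /wdeg -big_split; apply: eq_bigr => i _; rewrite mnmDE mulnDr. Qed.

Lemma wdegU i : wdeg U_(i)%MM = w i.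
Proof.
rewrite /wdeg (bigD1 i) //= big1 ?addn0 => [|j]; first by rewrite mnm1E eqxx muln1.
by rewrite mnm1E eq_sym => /negbTE ->; rewrite muln0.
Qed.

Lemma leq_wdeg m1 m2 : (forall i, m1 i <= m2 i)%N -> (wdeg m1 <= wdeg m2)%N.
Proof. by move=> le_m12; apply: leq_sum => i _; rewrite leq_mul2l le_m12 orbT. Qed.

Lemma wlead_le P M m : wlead P M -> P@_m != 0 -> (wdeg m <= wdeg M)%N.
Proof. by move=> [_ PM] Pm; have [->|/PM/(_ Pm)/ltnW] := eqVneq m M. Qed.

Lemma wlead_floor P M m : wlead P M -> P@_m != 0 -> (forall i, M i <= m i)%N -> m = M.
Proof.
move=> [_ PM] Pm le_Mm; apply/eqP; apply: contraT => /PM/(_ Pm).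
by rewrite ltnNge leq_wdeg.
Qed.

Lemma wlead_pair_lt P Q M N m1 m2 : wlead P M -> wlead Q N ->
    P@_m1 != 0 -> Q@_m2 != 0 -> (m1, m2) != (M, N) ->
  (wdeg (m1 + m2)%MM < wdeg M + wdeg N)%N.
Proof.
move=> PM QN Pm1 Qm2; have [_ ltM] := PM; have [_ ltN] := QN.
rewrite wdegD xpair_eqE negb_and => /orP[/ltM/(_ Pm1) lt1|/ltN/(_ Qm2) lt2].
  by rewrite -addSn leq_add ?(wlead_le QN).
by rewrite -addnS leq_add ?(wlead_le PM).
Qed.

Lemma wleadM P Q M N : wlead P M -> wlead Q N -> wlead (P * Q) (M + N)%MM.
Proof.
move=> PM QN; have [PM_neq0 _] := PM; have [QN_neq0 _] := QN.
split=> [|m m_neq PQm].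
  have MN_supp : (M, N) \in [seq (m1, m2) | m1 <- msupp P, m2 <- msupp Q].
    by rewrite allpairs_f // mcoeff_msupp.
  rewrite mpolyME raddf_sum /= (bigD1_seq (M, N)) ?allpairs_uniq ?msupp_uniq //=.
    rewrite big1 ?addr0 => [|[m1 m2] /= m12_neq].
      by rewrite mcoeffZ mcoeffX eqxx mulr1 mulf_neq0.
    rewrite mcoeffZ mcoeffX; have [m12|] := eqVneq; last by rewrite mulr0.
    have [P0|Pm1] := eqVneq P@_m1 0; first by rewrite P0 !mul0r.
    have [Q0|Qm2] := eqVneq Q@_m2 0; first by rewrite Q0 mulr0 mul0r.
    by have := wlead_pair_lt PM QN Pm1 Qm2 m12_neq; rewrite m12 wdegD ltnn.
  by move=> [? ?] [? ?] _ _ /= [-> ->].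
have /msuppM_le/allpairsP[[m1 m2] [/= Pm1 Qm2 m_eq]] : m \in msupp (P * Q).
  by rewrite mcoeff_msupp.
rewrite m_eq [wdeg (M + N)%MM]wdegD (wlead_pair_lt PM QN) -?mcoeff_msupp //.
by apply: contraNneq m_neq => -[<- <-]; rewrite m_eq.
Qed.

Lemma wlead1 : wlead 1 0%MM.
Proof. by split=> [|m]; rewrite mcoeff1 ?eqxx ?oner_eq0 // => /negbTE->; rewrite eqxx. Qed.

Lemma wlead_prod (I : Type) (r : seq I) (B : pred I) (F : I -> R) (L : I -> 'X_{1..n}) :
    (forall i, B i -> wlead (F i) (L i)) ->
  wlead (\prod_(i <- r | B i) F i) (\big[+%MM/0%MM]_(i <- r | B i) L i).
Proof. by move=> FL; elim/big_rec2: _ => [|i Q M /FL]; [exact: wlead1 | exact: wleadM]. Qed.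

Lemma wleadXn P M k : wlead P M -> wlead (P ^+ k) (M *+ k)%MM.
Proof.
move=> PM; elim: k => [|k IHk]; first by rewrite expr0 mulm0n; exact: wlead1.
by rewrite exprS mulmS; exact: wleadM.
Qed.

Lemma wleadZX (c : K) M : c != 0 -> wlead (c *: 'X_[M]) M.
Proof.
move=> c_neq0; split=> [|m]; rewrite mcoeffZ mcoeffX ?eqxx ?mulr1 //.
by rewrite eq_sym => /negbTE->; rewrite mulr0 eqxx.
Qed.

Lemma wlead_mpolyX M : wlead 'X_[M] M.
Proof. by rewrite -[X in wlead X]scale1r; apply: wleadZX; exact: oner_neq0. Qed.

Lemma wleadDr P Q M : wlead P M ->
  (forall m, Q@_m != 0 -> (wdeg m < wdeg M)%N) -> wlead (P + Q) M.
Proof.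
move=> [PM_neq0 ltM] ltQ; have QM0 : Q@_M = 0.
  by apply/eqP; apply: contraT => /ltQ; rewrite ltnn.
split=> [|m m_neq]; first by rewrite mcoeffD QM0 addr0.
rewrite mcoeffD; have [Pm0|/(ltM _ m_neq)//] := eqVneq P@_m 0.
by rewrite Pm0 add0r; exact: ltQ.
Qed.

Lemma wdeg_sum_lt (I : eqType) (r : seq I) (F : I -> R) (a : nat) :
    {in r, forall i m, (F i)@_m != 0 -> (wdeg m < a)%N} ->
  forall m, (\sum_(i <- r) F i)@_m != 0 -> (wdeg m < a)%N.
Proof.
move=> ltF m; elim: r ltF => [|i r IHr] ltF; first by rewrite big_nil mcoeff0 eqxx.
rewrite big_cons mcoeffD; have [Fm0|/ltF->//] := eqVneq (F i)@_m 0; last exact: mem_head.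
by rewrite Fm0 add0r; apply: IHr => j rj; apply: ltF; rewrite inE rj orbT.
Qed.
End WeightedLead.

Section CartierOperator.
Variables (K : fieldType) (n p : nat) (sigma : K -> K).
Hypotheses (pK : p \in [pchar K]) (sigma_plin : p_inverse_linear p sigma).
Local Notation R := {mpoly K[n]}.

Let p_gt0 : (0 < p)%N. Proof. exact/prime_gt0/(pcharf_prime pK). Qed.
Let sigmaD := sigma_plin.1.
Let sigmaZ := sigma_plin.2.

Let sigma0 : sigma 0 = 0.
Proof. by apply: (addrI (sigma 0)); rewrite -sigmaD !addr0. Qed.

Definition trace_mnm (m : 'X_{1..n}) : bool := [forall i, (m i %% p == p.-1)%N].

Definition mnm_divp (m : 'X_{1..n}) : 'X_{1..n} := [multinom (m i %/ p)%N | i < n].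

Definition mnm_predp : 'X_{1..n} := [multinom p.-1 | i < n].

Definition cartier_term (m : 'X_{1..n}) (c : K) : R :=
  if trace_mnm m then sigma c *: 'X_[mnm_divp m] else 0.

Definition cartier (r : R) : R := \sum_(m <- msupp r) cartier_term m r@_m.

Lemma cartier_term0 m : cartier_term m 0 = 0.
Proof. by rewrite /cartier_term sigma0 scale0r; case: ifP. Qed.

Lemma cartier_termD m c1 c2 : cartier_term m (c1 + c2) = cartier_term m c1 + cartier_term m c2.
Proof. by rewrite /cartier_term sigmaD scalerDl; case: ifP; rewrite ?addr0. Qed.

Lemma cartierE s r : uniq s -> {subset msupp r <= s} ->
  cartier r = \sum_(m <- s) cartier_term m r@_m.
Proof.
move=> s_uniq r_s; rewrite (bigID (mem (msupp r))) /= [X in _ + X]big1 ?addr0; last first.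
  by move=> m; rewrite -mcoeff_eq0 => /eqP->; rewrite cartier_term0.
rewrite -big_filter; apply: perm_big; apply: uniq_perm; rewrite ?filter_uniq ?msupp_uniq //.
by move=> m; rewrite mem_filter andb_idr //; exact: r_s.
Qed.

Lemma cartierD r1 r2 : cartier (r1 + r2) = cartier r1 + cartier r2.
Proof.
pose s := undup (msupp r1 ++ msupp r2).
have s1 : {subset msupp r1 <= s} by move=> m; rewrite mem_undup mem_cat => ->.
have s2 : {subset msupp r2 <= s} by move=> m; rewrite mem_undup mem_cat => ->; rewrite orbT.
have s12 : {subset msupp (r1 + r2) <= s} by move=> m /msuppD_le; rewrite mem_undup.
rewrite !(@cartierE s) ?undup_uniq //.
by rewrite -big_split; apply: eq_bigr => m _; rewrite mcoeffD cartier_termD.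
Qed.

Lemma cartier0 : cartier 0 = 0.
Proof. by rewrite /cartier msupp0 big_nil. Qed.

Lemma cartier_sum (I : Type) (r : seq I) (B : pred I) (F : I -> R) :
  cartier (\sum_(i <- r | B i) F i) = \sum_(i <- r | B i) cartier (F i).
Proof. by elim/big_rec2: _ => [|i y1 y2 _ <-]; rewrite ?cartier0 ?cartierD. Qed.

Lemma cartierZX c m : cartier (c *: 'X_[m]) = cartier_term m c.
Proof.
rewrite (@cartierE [:: m]) ?big_seq1 ?mcoeffZ ?mcoeffX ?eqxx ?mulr1 //.
move=> m'; rewrite mem_seq1 mcoeff_msupp mcoeffZ mcoeffX [m == _]eq_sym.
by case: (m' == m); rewrite ?mulr0 ?eqxx.
Qed.

Lemma cartier_frobM_mono l a c b :
  cartier ((l *: 'X_[a]) ^+ p * (c *: 'X_[b])) = l *: 'X_[a] * cartier (c *: 'X_[b]).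
Proof.
rewrite -!mul_mpolyC exprMn -rmorphXn mpolyXn mulrACA -rmorphM -mpolyXD.
rewrite !mul_mpolyC !cartierZX /cartier_term.
have -> : trace_mnm (a *+ p + b)%MM = trace_mnm b.
  by apply: eq_forallb => i; rewrite mnmDE mulmnE modnMDl.
case: ifP; rewrite ?mulr0 // => _.
rewrite sigmaZ -!mul_mpolyC mulrACA -mpolyXD -rmorphM; congr (_ * 'X_[_]).
by apply/mnmP => i; rewrite mnmDE !mnmE mulmnE divnMDl.
Qed.

Lemma cartier_frobM s t : cartier (s ^+ p * t) = s * cartier t.
Proof.
have pR : p \in [pchar R] := rmorph_pchar (@mpolyC n K) pK.
elim/mpolyind: t => [|c b t _ _ IHt]; first by rewrite mulr0 cartier0 mulr0.
rewrite mulrDr !cartierD IHt mulrDr; congr (_ + _); clear IHt.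
elim/mpolyind: s => [|l a s _ _ IHs]; first by rewrite expr0n gtn_eqF // !mul0r cartier0.
by rewrite exprDp // mulrDl cartierD IHs cartier_frobM_mono mulrDl.
Qed.

Lemma cartier_predp F :
    (forall m, F@_m != 0 -> trace_mnm m -> m = mnm_predp) ->
  cartier F = (sigma F@_mnm_predp)%:MP.
Proof.
move=> F_trace; have [F0|FM_neq0] := eqVneq F@_mnm_predp 0.
  rewrite F0 sigma0 /cartier big_seq big1 // => m; rewrite mcoeff_msupp /cartier_term.
  by case: ifP => // tr Fm; move: (Fm); rewrite (F_trace m) // F0 eqxx.
rewrite /cartier (bigD1_seq mnm_predp) ?msupp_uniq ?mcoeff_msupp //= big_seq_cond.
rewrite big1 ?addr0 => [|m /andP[]]; last first.
  rewrite mcoeff_msupp /cartier_term => Fm m_neq; case: ifP => // tr.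
  by rewrite (F_trace m) ?eqxx in m_neq.
rewrite /cartier_term; have -> : trace_mnm mnm_predp.
  by apply/forallP => i; rewrite mnmE modn_small // prednK.
have -> : mnm_divp mnm_predp = 0%MM.
  by apply/mnmP => i; rewrite !mnmE divn_small // prednK.
by rewrite mpolyX0 -mul_mpolyC mulr1.
Qed.

Lemma cartier_mul_splitting F : sigma 1 = 1 -> F@_mnm_predp = 1 ->
    (forall m, F@_m != 0 -> trace_mnm m -> m = mnm_predp) ->
  frobenius_splitting p (fun r => cartier (F * r)).
Proof.
move=> sigma1 FM1 F_trace; split; first split.
- by move=> x y; rewrite mulrDr cartierD.
- by move=> x y; rewrite mulrCA cartier_frobM.
- by rewrite mulr1 (cartier_predp F_trace) FM1 sigma1.
Qed.

Lemma mnm_predpE : mnm_predp = ([multinom 1%N | i < n] *+ p.-1)%MM.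
Proof. by apply/mnmP => i; rewrite mulmnE !mnmE mul1n. Qed.

Lemma wlead_trace_mnm (w : 'I_n -> nat) (f : R) m :
    wlead w f [multinom 1%N | i < n] -> (f ^+ p.-1)@_m != 0 -> trace_mnm m ->
  m = mnm_predp.
Proof.
rewrite mnm_predpE => /(wleadXn p.-1) fX fXm /forallP tr_m; apply: wlead_floor fX fXm _ => i.
by rewrite mulmnE mnmE mul1n -(eqP (tr_m i)) leq_mod.
Qed.

Lemma cartier_wlead_splitting (w : 'I_n -> nat) (f : R) : sigma 1 = 1 ->
    wlead w f [multinom 1%N | i < n] ->
  frobenius_splitting p
    (fun r => cartier (((f ^+ p.-1)@_mnm_predp)^-1 *: f ^+ p.-1 * r)).
Proof.
move=> sigma1 f_lead; have [fX_neq0 _] := wleadXn p.-1 f_lead.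
rewrite -mnm_predpE in fX_neq0.
apply: cartier_mul_splitting => [//||m]; first by rewrite mcoeffZ mulVf.
rewrite mcoeffZ mulf_eq0 invr_eq0 negb_or => /andP[_].
exact: wlead_trace_mnm f_lead.
Qed.

End CartierOperator.

Notation nvar := (3 * 3 + 3 * 3)%N.

(* [(false, i, j)] is the variable x_ij and [(true, i, j)] is y_ij. *)
Definition matvar := (bool * 'I_3 * 'I_3)%type.

Definition var_index (d : matvar) : 'I_nvar :=
  let: (b, i, j) := d in
  if b then rshift (3 * 3) (mxvec_index i j) else lshift (3 * 3) (mxvec_index i j).

Definition var_of_index (v : 'I_nvar) : matvar :=
  let ij k := enum_val (cast_ord (esym (mxvec_cast 3 3)) k) : 'I_3 * 'I_3 in
  match split v with
  | inl k => (false, (ij k).1, (ij k).2)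
  | inr k => (true, (ij k).1, (ij k).2)
  end.

Lemma var_indexK : cancel var_index var_of_index.
Proof.
move=> [[[] i] j]; rewrite /var_of_index /=.
  by rewrite (unsplitK (inr _ _)) /mxvec_index cast_ordK enum_rankK.
by rewrite (unsplitK (inl _ _)) /mxvec_index cast_ordK enum_rankK.
Qed.

Lemma var_of_indexK : cancel var_of_index var_index.
Proof.
move=> v; rewrite -[v]splitK /var_of_index unsplitK.
by case: (split v) => k; case/mxvec_indexP: k => i j; rewrite /mxvec_index cast_ordK enum_rankK.
Qed.

Lemma var_index_inj : injective var_index.
Proof. exact: can_inj var_indexK. Qed.

(* The weights are chosen so that every off-diagonal entry of XY - YX has a
   unique heaviest monomial, and these six monomials involve twelve distinct
   variables. *)
Definition matvar_weight (d : matvar) : nat :=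
  let: (b, i, j) := d in
  nth 0 (if b then [:: 4; 13; 3; 9; 7; 17; 11; 12; 5]
              else [:: 12; 10; 12; 14; 1; 11; 4; 16; 1]) (i * 3 + j).

Definition weight (v : 'I_nvar) : nat := matvar_weight (var_of_index v).

(* [(d, d', s)] stands for the monomial (-1)^s x_d x_d'. *)
Definition qterm := (matvar * matvar * bool)%type.

Definition qmnm (t : qterm) : 'X_{1..nvar} := (U_(var_index t.1.1) + U_(var_index t.1.2))%MM.

Definition qweight (t : qterm) : nat := (matvar_weight t.1.1 + matvar_weight t.1.2)%N.

Lemma wdeg_qmnm t : wdeg weight (qmnm t) = qweight t.
Proof. by rewrite wdegD !wdegU /weight !var_indexK. Qed.

(* Spelled as big_ord_recl enumerates 'I_3, so that commXY_terms is a ring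
   identity. *)
Definition o0 : 'I_3 := ord0.
Definition o1 : 'I_3 := lift ord0 (ord0 : 'I_2).
Definition o2 : 'I_3 := lift ord0 (lift ord0 (ord0 : 'I_1)).

Definition entry_terms (i j : 'I_3) : seq qterm :=
  [:: ((false, i, o0), (true, o0, j), false); ((true, i, o0), (false, o0, j), true);
      ((false, i, o1), (true, o1, j), false); ((true, i, o1), (false, o1, j), true);
      ((false, i, o2), (true, o2, j), false); ((true, i, o2), (false, o2, j), true)].

Definition lead_rank (i j : 'I_3) : nat :=
  nth 0 (nth [::] [:: [:: 0; 0; 2]; [:: 4; 0; 1]; [:: 3; 2; 0]] i) j.

Definition lead_mnm (i j : 'I_3) : 'X_{1..nvar} :=
  qmnm (nth ((false, i, j), (false, i, j), false) (entry_terms i j) (lead_rank i j)).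

Section CommutatorEntries.
Variable K : fieldType.
Local Notation g := (commXY K).

Definition qpoly (t : qterm) : polyR K := (-1) ^+ t.2 *: 'X_[qmnm t].

Lemma commXY_terms i j : g i j = \sum_(t <- entry_terms i j) qpoly t.
Proof.
rewrite /commXY /qpoly !mxE !big_ord_recl !big_ord0 !big_cons big_nil !mxE /=.
by rewrite !mpolyXD !expr0 !expr1 !scale1r !scaleN1r; ring.
Qed.

Lemma wlead_qsum t s : all (fun u => qweight u < qweight t)%N s ->
  wlead weight (\sum_(u <- t :: s) qpoly u) (qmnm t).
Proof.
move=> /allP lt_t; rewrite big_cons; apply: wleadDr; first by apply: wleadZX; rewrite signr_eq0.
rewrite wdeg_qmnm; apply: wdeg_sum_lt => u /lt_t lt_u m; rewrite mcoeffZ mcoeffX.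
by have [<- _|] := eqVneq (qmnm u) m; [rewrite wdeg_qmnm | rewrite mulr0 eqxx].
Qed.

Lemma wlead_commXY i j : i != j -> wlead weight (g i j) (lead_mnm i j).
Proof.
move=> ij; rewrite commXY_terms -(perm_big _ (permEl (perm_rot (lead_rank i j) _))).
by case: i ij => [[|[|[|?]]] ?] //; case: j => [[|[|[|?]]] ?] // _; apply: wlead_qsum.
Qed.

End CommutatorEntries.

Definition comm_lead : 'X_{1..nvar} :=
  \big[+%MM/0%MM]_(i < 3) \big[+%MM/0%MM]_(j < 3 | i != j) lead_mnm i j.

Lemma qmnm_var t d : qmnm t (var_index d) = ((t.1.1 == d) + (t.1.2 == d))%N.
Proof. by rewrite mnmDE !mnm1E !(inj_eq var_index_inj). Qed.

Lemma comm_lead_le1 v : (comm_lead v <= 1)%N.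
Proof.
rewrite -[v]var_of_indexK; move: (var_of_index v) => d.
rewrite /comm_lead mnm_sumE; under eq_bigr => i _ do rewrite mnm_sumE big_mkcond.
rewrite !big_ord_recl !big_ord0 /lead_mnm !qmnm_var.
by case: d => [[[] [[|[|[|?]]] ?]] [[|[|[|?]]] ?]].
Qed.

Definition comm_cofactor : 'X_{1..nvar} := [multinom (1 - comm_lead v)%N | v < nvar].

Section FedderPolynomial.
Variable K : fieldType.
Local Notation g := (commXY K).

Definition fedder_poly : polyR K :=
  (\prod_(i < 3) \prod_(j < 3 | i != j) g i j) * 'X_[comm_cofactor].

Definition fedder_quot (i j : 'I_3) : polyR K :=
  (\prod_(k : 'I_3 * 'I_3 | (k.1 != k.2) && (k != (i, j))) g k.1 k.2) * 'X_[comm_cofactor].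

Lemma fedder_polyE i j : i != j -> fedder_poly = g i j * fedder_quot i j.
Proof. by move=> ij; rewrite /fedder_poly pair_big_dep (bigD1 (i, j)) //= mulrA. Qed.

Lemma wlead_fedder_poly : wlead weight fedder_poly [multinom 1%N | v < nvar].
Proof.
have -> : [multinom 1%N | v < nvar] = (comm_lead + comm_cofactor)%MM.
  by apply/mnmP => v; rewrite mnmDE !mnmE subnKC ?comm_lead_le1.
apply: wleadM (wlead_mpolyX _ _ _); apply: wlead_prod => i _.
by apply: wlead_prod => j; exact: wlead_commXY.
Qed.

Lemma in_I_cartier_fedder p sigma (c : K) r :
    p \in [pchar K] -> p_inverse_linear p sigma -> in_I r ->
  in_I (cartier p sigma (c *: fedder_poly ^+ p.-1 * r)).
Proof.
move=> pK sigma_plin [a ->].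
exists (fun i j => cartier p sigma (c *: fedder_quot i j ^+ p.-1 * a i j)).
rewrite mulr_sumr (cartier_sum sigma_plin); apply: eq_bigr => i _.
rewrite mulr_sumr (cartier_sum sigma_plin); apply: eq_bigr => j ij.
have -> : c *: fedder_poly ^+ p.-1 * (a i j * g i j) =
    g i j ^+ p * (c *: fedder_quot i j ^+ p.-1 * a i j).
  rewrite (fedder_polyE ij) -(prednK (prime_gt0 (pcharf_prime pK))) /=.
  by rewrite -!mul_mpolyC exprS exprMn; ring.
by rewrite (cartier_frobM pK sigma_plin) mulrC.
Qed.

End FedderPolynomial.

Theorem mainTheorem1 (K : fieldType) (p : nat) (hp : p \in [pchar K])
  (S : comPzRingType) (phi : {rmorphism polyR K -> S})
  (phi_surj : forall s : S, exists r, phi r = s)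
  (phi_ker : forall r, phi r = 0 <-> in_I r) :
  Fpure S p.
Proof.
have [sigma [sigma_plin sigma1]] := frobenius_splitting_field hp.
have theta_split := cartier_wlead_splitting hp sigma_plin sigma1 (wlead_fedder_poly K).
have [|psi psi_split] := frobenius_splitting_quotient phi_surj theta_split.
  by move=> r /phi_ker I_r; apply/phi_ker; exact: in_I_cartier_fedder.
exact: Fpure_frobenius_splitting psi_split.
Qed.
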